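(* Let $(G_n)_{n\ge1}$ be an expanding covering tower of finite $k$-regular graphs. Then exactly one of the following holds: (1) all but finitely many of the $G_n$ are bipartite; (2) there exists $r>0$ such that for every $n$, at least $r|V(G_n)|$ edges of $G_n$ must be erased to make it bipartite.
   Context: A covering tower is a sequence of finite connected graphs $G_n$ together with covering maps $G_{n+1}\to G_n$ for all $n\ge1$. It is expanding if the Cheeger constants $\mathrm{Ch}(G_n)=\min_{0<|A|\le|V(G_n)|/2}|L(A)|/|A|$ (with $L(A)$ the set of edges between $A$ and its complement) are bounded below by a positive constant. *)

From HB Require Import structures.
From mathcomp Require Import all_boot all_order all_algebra.
Set Implicit Arguments. Unset Strict Implicit. Unset Printing Implicit Defensive.
Import Order.TTheory GRing.Theory Num.Theory.

Definition simple_graph (V : finType) (e : rel V) : Prop :=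
  symmetric e /\ irreflexive e.

Definition connected_graph (V : finType) (e : rel V) : Prop :=
  (0 < #|V|)%N /\ forall x y : V, connect e x y.

Definition regular_graph (k : nat) (V : finType) (e : rel V) : Prop :=
  forall x : V, #|[set y | e x y]| = k.

Definition covering_map (V1 V2 : finType) (e1 : rel V1) (e2 : rel V2)
    (f : V1 -> V2) : Prop :=
  [/\ forall y : V2, exists x : V1, f x = y,
      forall x y : V1, e1 x y -> e2 (f x) (f y),
      forall x : V1, {in [set y | e1 x y] &, injective f} &
      forall x : V1, f @: [set y | e1 x y] = [set z | e2 (f x) z]].

(* Covering tower (indexed from 0 rather than 1): graphs G_n = (V n, adj n)
   that are finite, simple, connected, with covering maps p n : G_{n+1} -> G_n. *)
Definition covering_tower (V : nat -> finType) (adj : forall n, rel (V n))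
    (p : forall n, V n.+1 -> V n) : Prop :=
  forall n, [/\ simple_graph (adj n), connected_graph (adj n) &
                covering_map (adj n.+1) (adj n) (p n)].

(* L(A): the edges between A and its complement (each counted once,
   oriented from A to its complement). *)
Definition boundary (V : finType) (e : rel V) (A : {set V}) : {set V * V} :=
  [set xy : V * V | [&& xy.1 \in A, xy.2 \notin A & e xy.1 xy.2]].

(* Ch(G) >= c, i.e. |L(A)|/|A| >= c for every 0 < |A| <= |V|/2
   (this is what "min_{A} |L(A)|/|A| >= c" unfolds to). *)
Definition cheeger_ge (V : finType) (e : rel V) (c : rat) : Prop :=
  forall A : {set V}, (0 < #|A|)%N -> (2 * #|A| <= #|V|)%N ->
    (c <= (#|boundary e A|%:R / #|A|%:R))%R.

Definition expanding (V : nat -> finType) (adj : forall n, rel (V n)) : Prop :=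
  exists c : rat, (0 < c)%R /\ forall n, cheeger_ge (adj n) c.

Definition bipartite (V : finType) (e : rel V) : Prop :=
  exists col : V -> bool, forall x y : V, e x y -> col x != col y.

Definition edges (V : finType) (e : rel V) : {set {set V}} :=
  [set [set xy.1; xy.2] | xy in [set xy : V * V | e xy.1 xy.2]].

Definition erase_edges (V : finType) (e : rel V) (F : {set {set V}}) : rel V :=
  fun x y => e x y && ([set x; y] \notin F).

Definition bip_erase_ge (V : finType) (e : rel V) (m : rat) : Prop :=
  forall F : {set {set V}}, F \subset edges e -> bipartite (erase_edges e F) ->
    (m <= #|F|%:R)%R.

From HB Require Import structures.
From mathcomp Require Import all_boot all_order all_algebra.
From mathcomp Require Import zify lra.
From Stdlib Require Import Classical.
Import Order.TTheory GRing.Theory Num.Theory.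

Set Implicit Arguments. Unset Strict Implicit. Unset Printing Implicit Defensive.

(* Bipartiteness lifts along coverings, so if infinitely many G_n are not
   bipartite then none is.  Let f : G_m -> G_n be a covering with fibres of
   size D, g a colouring of G_n and col a colouring of G_m.  Each edge uv of
   G_n lifts to a perfect matching between the fibres over u and v, so the
   number of col-true vertices in the fibre over v is close to D minus that
   over u, up to the number of col-monochromatic edges.  Going round an odd
   cycle of G_n, every fibre is therefore split almost evenly by col, hence
   so is the set A where col agrees with g o f.  The boundary of A consists
   of col-monochromatic edges and the D lifts of each g-monochromatic edge,
   and the Cheeger bound yields c |G_m| <= O(#mono(col)) + 4 D #mono(g).
   If some level carries a colouring g with 4 #mono(g) <= c |G_n|, the last
   term is absorbed and every higher level needs a linear number of
   erasures (the finitely many lower levels are not bipartite); otherwise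
   every level already needs c |G_m| / 8 of them. *)

(* [covering_map] with the neighbourhood bijection split into injectivity and
   lifting of edges: in this form coverings compose. *)
Definition local_cover (V1 V2 : finType) (e1 : rel V1) (e2 : rel V2)
    (f : V1 -> V2) : Prop :=
  [/\ forall y, exists x, f x = y,
      forall x y, e1 x y -> e2 (f x) (f y),
      forall x y1 y2, e1 x y1 -> e1 x y2 -> f y1 = f y2 -> y1 = y2 &
      forall x u, e2 (f x) u -> exists2 y, e1 x y & f y = u].

Lemma covering_map_local (V1 V2 : finType) (e1 : rel V1) (e2 : rel V2) f :
  covering_map e1 e2 f -> local_cover e1 e2 f.
Proof.
case=> f_onto f_homo f_inj f_nbhd; split=> // [x y1 y2 xy1 xy2|x u xu].
  by apply: (f_inj x); rewrite inE.
have : u \in [set z | e2 (f x) z] by rewrite inE.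
by rewrite -f_nbhd => /imsetP[y]; rewrite inE => xy ->; exists y.
Qed.

Lemma local_cover_id (V : finType) (e : rel V) : local_cover e e id.
Proof. by split=> // [y|x u xu]; [exists y | exists u]. Qed.

Lemma local_cover_comp (V1 V2 V3 : finType) (e1 : rel V1) (e2 : rel V2)
    (e3 : rel V3) f g :
  local_cover e1 e2 f -> local_cover e2 e3 g -> local_cover e1 e3 (g \o f).
Proof.
case=> f_onto f_homo f_inj f_lift [g_onto g_homo g_inj g_lift]; split=> /=.
- by move=> z; have [y <-] := g_onto z; have [x <-] := f_onto y; exists x.
- by move=> x y /f_homo/g_homo.
- move=> x y1 y2 xy1 xy2 /(g_inj _ _ _ (f_homo _ _ xy1) (f_homo _ _ xy2)).
  exact: f_inj xy1 xy2.
- move=> x u /g_lift[z fxz <-]; have [y xy <-] := f_lift _ _ fxz; by exists y.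
Qed.

Lemma bipartite_local_cover (V1 V2 : finType) (e1 : rel V1) (e2 : rel V2) f :
  local_cover e1 e2 f -> bipartite e2 -> bipartite e1.
Proof.
by case=> _ f_homo _ _ [col col_proper]; exists (col \o f) => x y /f_homo/col_proper.
Qed.

Lemma card_local_cover (V1 V2 : finType) (e1 : rel V1) (e2 : rel V2) f :
  local_cover e1 e2 f -> (#|V2| <= #|V1|)%N.
Proof.
case=> f_onto _ _ _; rewrite -cardsT -(cardsT V1).
apply: leq_trans (leq_imset_card f _); apply: subset_leq_card.
by apply/subsetP=> y _; have [x <-] := f_onto y; rewrite imset_f.
Qed.

Section Fibres.
Variables (V1 V2 : finType) (e1 : rel V1) (e2 : rel V2) (f : V1 -> V2).
Hypothesis f_cover : local_cover e1 e2 f.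
Hypotheses (e1_sym : symmetric e1) (e2_sym : symmetric e2).

Definition fibre v := [set x | f x == v].

Definition edge_lifts u v : {set V1 * V1} :=
  [set xy | [&& e1 xy.1 xy.2, f xy.1 == u & f xy.2 == v]].

Lemma card_edge_lifts_fst (P : pred V1) u v : e2 u v ->
  #|edge_lifts u v :&: [set xy | P xy.1]| = #|fibre u :&: [set x | P x]|.
Proof.
case: f_cover => _ _ f_inj f_lift euv.
rewrite -(@card_in_imset _ _ fst) => [|[x y] [x' y']]; last first.
  rewrite !inE /= => /andP[/and3P[xy _ /eqP fy] _] /andP[/and3P[x'y' _ /eqP fy']] _.
  by move=> /= Ex; subst x'; rewrite (f_inj x y y') // fy fy'.
apply: eq_card => x; rewrite !inE; apply/imsetP/andP => [[[x' y]]|[/eqP fx Px]].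
  by rewrite !inE /= => /andP[/and3P[_ ? _] ?] ->.
have [y xy fy] := f_lift x v ltac:(by rewrite fx).
by exists (x, y); rewrite // !inE /= xy fx fy !eqxx.
Qed.

Lemma card_edge_lifts_snd (P : pred V1) u v : e2 u v ->
  #|edge_lifts u v :&: [set xy | P xy.2]| = #|fibre v :&: [set x | P x]|.
Proof.
rewrite e2_sym => evu; rewrite -(card_edge_lifts_fst P evu).
rewrite -(card_imset _ (can_inj swap_pairK)).
rewrite (can2_imset_pre _ swap_pairK swap_pairK); apply: eq_card => -[x y].
by rewrite !inE /= e1_sym; do 2!case: eqP.
Qed.

Lemma card_edge_lifts u v : e2 u v -> #|edge_lifts u v| = #|fibre u|.
Proof. by move/(card_edge_lifts_fst predT); rewrite !setIT. Qed.

Lemma card_fibre_edge u v : e2 u v -> #|fibre u| = #|fibre v|.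
Proof.
move=> euv; rewrite -(card_edge_lifts euv) -(setIT (edge_lifts u v)).
by rewrite (card_edge_lifts_snd predT euv) setIT.
Qed.

Lemma card_fibre_connect u v : connect e2 u v -> #|fibre u| = #|fibre v|.
Proof.
case/connectP=> s; elim: s u => [|w s IHs] u /=; first by move=> _ ->.
by case/andP=> /card_fibre_edge-> ws /(IHs w ws).
Qed.

Lemma card_fibre_partition (A : {set V1}) : #|A| = \sum_v #|fibre v :&: A|.
Proof.
rewrite -sum1_card (partition_big f predT) //=; apply: eq_bigr => v _.
by rewrite -sum1_card; apply: eq_bigl => x; rewrite !inE andbC.
Qed.

End Fibres.

Lemma homo_connect (T U : finType) (e : rel T) (e' : rel U) (h : T -> U) :
  {homo h : x y / e x y >-> e' x y} ->
  {homo h : x y / connect e x y >-> connect e' x y}.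
Proof.
move=> h_homo x _ /connectP[s xs ->]; apply/connectP.
by exists (map h s); [exact: homo_path xs | rewrite last_map].
Qed.

Lemma connect_lipschitz (T : finType) (e : rel T) (q : T -> nat) K a b :
  (forall x y, e x y -> q y <= q x + K) -> connect e a b -> q b <= q a + #|T| * K.
Proof.
move=> q_lip /connectP[s0 /shortenP[s es s_uniq _] ->] {s0}.
have /leq_trans-> // : q (last a s) <= q a + size s * K.
  elim: s a es {s_uniq} => [|y s IHs] a /=; first by rewrite addn0.
  by case/andP=> /q_lip qy /IHs/leq_trans->; rewrite // mulSn addnA leq_add2r.
have size_s : size (a :: s) <= #|T| by rewrite -(card_uniqP s_uniq) max_card.
by rewrite leq_add2l leq_mul2r (ltnW size_s) orbT.
Qed.

Section DoubleCover.
Variables (V : finType) (e : rel V).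

Definition double_cover : rel (V * bool) := fun a b => e a.1 b.1 && (b.2 == ~~ a.2).

Lemma double_cover_sym : symmetric e -> symmetric double_cover.
Proof.
by move=> e_sym [x b] [y b']; rewrite /double_cover /= e_sym; case: b; case: b'.
Qed.

Lemma double_cover_flip x b y b' : connect double_cover (x, b) (y, b') ->
  connect double_cover (x, ~~ b) (y, ~~ b').
Proof.
apply: (homo_connect (h := fun a => (a.1, ~~ a.2))) => -[x1 b1] [y1 c1].
by rewrite /double_cover /=; case: b1; case: c1.
Qed.

Lemma double_cover_lift v x b : connect e v x ->
  exists b', connect double_cover (v, b) (x, b').
Proof.
case/connectP=> s; elim: s v b => [|y s IHs] v b /=; first by move=> _ ->; exists b.
case/andP=> evy ys /(IHs y (~~ b) ys)[b' yx]; exists b'.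
by apply: connect_trans yx; apply: connect1; rewrite /double_cover /= evy eqxx.
Qed.

Lemma double_cover_odd v : symmetric e -> (forall x y, connect e x y) ->
  ~ bipartite e -> connect double_cover (v, false) (v, true).
Proof.
move=> e_sym e_conn e_nonbip; apply: contraT => /negP no_odd; case: e_nonbip.
have dc_sym := sym_connect_sym (double_cover_sym e_sym).
exists (fun x => connect double_cover (v, false) (x, false)) => x y exy.
have step b : connect double_cover (x, b) (y, ~~ b).
  by apply: connect1; rewrite /double_cover /= exy eqxx.
case vx: (connect double_cover (v, false) (x, false)).
  apply/negP => vy; apply: no_odd; apply: connect_trans (connect_trans vx (step false)) _.
  by rewrite dc_sym; exact: double_cover_flip vy.
have [[] vx'] := double_cover_lift false (e_conn v x); last by rewrite vx' in vx.
by rewrite (connect_trans vx' (step true)).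
Qed.

End DoubleCover.

Section Monochromatic.
Variables (V : finType) (e : rel V).

(* Ordered pairs: every monochromatic edge is counted twice. *)
Definition monochromatic (col : V -> bool) : {set V * V} :=
  [set xy | e xy.1 xy.2 && (col xy.1 == col xy.2)].

Lemma monochromaticN col : monochromatic (fun x => ~~ col x) = monochromatic col.
Proof. by apply/setP => -[x y]; rewrite !inE /=; case: (col x); case: (col y). Qed.

Lemma monochromatic_gt0 col : ~ bipartite e -> 0 < #|monochromatic col|.
Proof.
move=> e_nonbip; rewrite card_gt0; apply: contra_notN e_nonbip => /eqP mono0.
exists col => x y exy; apply: contraT; rewrite negbK => cxy.
by have := in_set0 (x, y); rewrite -mono0 inE /= exy cxy.
Qed.

Lemma doubleton_eq (x y x' y' : V) : x != y -> [set x; y] = [set x'; y'] ->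
  (x', y') = (x, y) \/ (x', y') = (y, x).
Proof.
move=> xy /setP E; move: (E x) (E y) (E x'); rewrite !inE !eqxx ?orbT /=.
move=> /esym/orP[]/eqP ? /esym/orP[]/eqP ? /orP[]/eqP ?; subst;
  rewrite ?eqxx // in xy; by [left | right].
Qed.

Lemma card_monochromatic_erase (F : {set {set V}}) col : irreflexive e ->
  (forall x y, erase_edges e F x y -> col x != col y) ->
  #|monochromatic col| <= 2 * #|F|.
Proof.
move=> e_irr col_proper; pose ends (xy : V * V) := [set xy.1; xy.2].
have endsF xy : xy \in monochromatic col -> ends xy \in F.
  case: xy => x y; rewrite inE /= => /andP[exy /eqP cxy]; apply: contraT => xyF.
  by have := col_proper x y; rewrite /erase_edges exy xyF cxy eqxx; apply.
rewrite -sum1_card (partition_big ends (mem F)) //= mulnC -sum_nat_const.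
apply: leq_sum => T _; rewrite sum1dep_card.
set S := [set xy | _]; case: (set_0Vmem S) => [->|[xy]]; first by rewrite cards0.
rewrite inE => /andP[mono_xy /eqP ends_xy].
have neq_xy : xy.1 != xy.2.
  by apply: contraTneq mono_xy => Exy; rewrite inE Exy e_irr.
apply: leq_trans (_ : #|[set xy; (xy.2, xy.1)]| <= 2).
  apply/subset_leq_card/subsetP => -[x' y'].
  rewrite /S !inE -ends_xy => /andP[_ /eqP /esym].
  by case/(doubleton_eq neq_xy) => ->; rewrite -?surjective_pairing eqxx ?orbT.
by rewrite cards2 ltnS leq_b1.
Qed.

Lemma bip_erase_ge_monochromatic (c K : rat) : irreflexive e -> (0 < K)%R ->
  (forall col, c * #|V|%:R <= 4 * K * #|monochromatic col|%:R)%R ->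
  bip_erase_ge e (c / (8 * K) * #|V|%:R)%R.
Proof.
move=> e_irr K_gt0 mono_large F _ [col col_proper].
have mono_le : (#|monochromatic col|%:R <= 2 * #|F|%:R :> rat)%R.
  by rewrite -natrM ler_nat card_monochromatic_erase.
have mono_ge := mono_large col; rewrite mulrAC ler_pdivrMr ?mulr_gt0 //; nra.
Qed.

Lemma bip_erase_ge_bipartite (m : rat) : bipartite e -> bip_erase_ge e m -> (m <= 0)%R.
Proof.
move=> [col col_proper] /(_ set0 (sub0set _)); rewrite cards0; apply.
by exists col => x y /andP[/col_proper].
Qed.

End Monochromatic.

Lemma cheeger_ge_card (V : finType) (e : rel V) (c : rat) (A : {set V}) :
  cheeger_ge e c -> 2 * #|A| <= #|V| -> (c * #|A|%:R <= #|boundary e A|%:R)%R.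
Proof.
move=> e_cheeger small; have [->|A_gt0] := posnP #|A|; first by rewrite mulr0.
by rewrite -ler_pdivlMr ?ltr0n //; apply: e_cheeger.
Qed.

Section FibreBalance.
Variables (V1 V2 : finType) (e1 : rel V1) (e2 : rel V2) (f : V1 -> V2).
Hypothesis f_cover : local_cover e1 e2 f.
Hypotheses (e1_sym : symmetric e1) (e2_sym : symmetric e2).
Variable D : nat.
Hypothesis card_fibreD : forall v, #|fibre f v| = D.
Variable col : V1 -> bool.

Let M := #|monochromatic e1 col|.

Definition fibre_count v := #|fibre f v :&: [set x | col x]|.

Lemma fibre_count_le v : fibre_count v <= D.
Proof. by rewrite -(card_fibreD v) subset_leq_card ?subsetIl. Qed.

Lemma fibre_count_edge u v : e2 u v ->
  fibre_count u + fibre_count v <= D + M /\ D <= fibre_count u + fibre_count v + M.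
Proof.
(* The lifts of uv match the fibre over u with the fibre over v; a matched
   pair is monochromatic iff both or neither of its ends are coloured true. *)
move=> euv; set S := edge_lifts e1 f u v.
set X := S :&: [set xy | col xy.1]; set Y := S :&: [set xy | col xy.2].
have cardX : #|X| = fibre_count u by rewrite (card_edge_lifts_fst f_cover).
have cardY : #|Y| = fibre_count v.
  by rewrite (card_edge_lifts_snd f_cover e1_sym e2_sym).
have cardS : #|S| = D by rewrite (card_edge_lifts f_cover) // card_fibreD.
have XY_sub : X :|: Y \subset S by rewrite subUset !subsetIl.
have XY_mono : #|X :&: Y| <= M.
  apply/subset_leq_card/subsetP => xy; rewrite !inE.
  by case/andP=> /andP[/and3P[-> _ _] ->] /andP[_ ->].
have notXY_mono : #|S :\: (X :|: Y)| <= M.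
  apply/subset_leq_card/subsetP => xy; rewrite !inE; case/andP=> + Sxy.
  rewrite Sxy /=; move: Sxy => /and3P[-> _ _].
  by case: (col xy.1); case: (col xy.2).
rewrite cardsDS // in notXY_mono.
by have := cardsUI X Y; have := subset_leq_card XY_sub; lia.
Qed.

Definition signed_count (a : V2 * bool) :=
  if a.2 then D - fibre_count a.1 else fibre_count a.1.

Lemma signed_count_lipschitz a b :
  double_cover e2 a b -> signed_count b <= signed_count a + M.
Proof.
case: a b => u b [v b'] /andP[/= euv /eqP /= ->].
have [upper lower] := fibre_count_edge euv.
have := fibre_count_le u; have := fibre_count_le v.
by rewrite /signed_count; case: b => /=; lia.
Qed.

Hypotheses (e2_conn : forall x y, connect e2 x y) (e2_nonbip : ~ bipartite e2).

Lemma signed_count_balanced v b : D <= 2 * signed_count (v, b) + 2 * #|V2| * M.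
Proof.
have odd := double_cover_odd v e2_sym e2_conn e2_nonbip.
have odd' : connect (double_cover e2) (v, true) (v, false).
  by rewrite (sym_connect_sym (double_cover_sym e2_sym)).
have := connect_lipschitz signed_count_lipschitz odd.
have := connect_lipschitz signed_count_lipschitz odd'.
have := fibre_count_le v; rewrite card_prod card_bool /signed_count /=.
by case: b; lia.
Qed.

Definition agreement (g : V2 -> bool) := [set x | col x == g (f x)].

Lemma agreementN g : agreement (fun v => ~~ g v) = ~: agreement g.
Proof. by apply/setP => x; rewrite !inE; case: (col x); case: (g (f x)). Qed.

Lemma card_fibre_agreement g v :
  #|fibre f v :&: agreement g| = signed_count (v, ~~ g v).
Proof.
rewrite /signed_count /fibre_count /=; case gv: (g v) => /=.
  by apply: eq_card => x; rewrite !inE; case: (f x =P v) => // ->; rewrite gv eqb_id.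
rewrite -(card_fibreD v) -(cardsID [set x | col x] (fibre f v)) addKn.
apply: eq_card => x; rewrite !inE.
by case: (f x =P v) => [->|_]; rewrite ?andbF // gv eqbF_neg andbT.
Qed.

Lemma card_agreement_ge g : #|V1| <= 2 * #|agreement g| + #|V2| * (2 * #|V2| * M).
Proof.
rewrite -cardsT (card_fibre_partition f [set: V1]) (card_fibre_partition f (agreement g)).
rewrite big_distrr /= -sum_nat_const -big_split /=; apply: leq_sum => v _.
by rewrite setIT card_fibreD card_fibre_agreement signed_count_balanced.
Qed.

Lemma card_edges_over (B : {set V2 * V2}) : {in B, forall uv, e2 uv.1 uv.2} ->
  #|[set xy | e1 xy.1 xy.2 && ((f xy.1, f xy.2) \in B)]| = D * #|B|.
Proof.
move=> B_edges; rewrite -sum1_card.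
rewrite (partition_big (fun xy => (f xy.1, f xy.2)) (mem B)) /=.
  rewrite mulnC -sum_nat_const; apply: eq_bigr => -[u v] uvB.
  rewrite -(card_fibreD u) -(card_edge_lifts f_cover (B_edges _ uvB)) -sum1_card.
  apply: eq_bigl => -[x y]; rewrite !inE /= xpair_eqE.
  by case: (f x =P u) => [->|_]; case: (f y =P v) => [->|_]; rewrite ?andbF ?uvB ?andbT.
by move=> xy; rewrite inE => /andP[].
Qed.

Lemma card_boundary_agreement g :
  #|boundary e1 (agreement g)| <= M + D * #|monochromatic e2 g|.
Proof.
have [_ f_homo _ _] := f_cover.
rewrite -card_edges_over => [|uv]; last by rewrite inE => /andP[].
apply: leq_trans (leq_card_setU _ _); apply/subset_leq_card/subsetP => -[x y].
rewrite !inE /= => /and3P[+ + exy]; rewrite exy f_homo //=.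
by case: (col x); case: (col y); case: (g (f x)); case: (g (f y)).
Qed.

Lemma cheeger_monochromatic (c : rat) g : (0 <= c)%R -> cheeger_ge e1 c ->
  (c * #|V1|%:R <= 2 * (M + D * #|monochromatic e2 g|)%:R
                   + c * (#|V2| * (2 * #|V2| * M))%:R)%R.
Proof.
move=> c_ge0 e1_cheeger.
wlog small : g / 2 * #|agreement g| <= #|V1|.
  move=> wlog_small; have [|large] := leqP (2 * #|agreement g|) #|V1|.
    exact: wlog_small.
  (* [~~ g] has the complementary agreement set and the same monochromatic pairs. *)
  rewrite -(monochromaticN e2 g); apply: wlog_small.
  by rewrite agreementN cardsCs setCK; lia.
have cheeger := cheeger_ge_card e1_cheeger small.
have boundary_le : (#|boundary e1 (agreement g)|%:R
                    <= (M + D * #|monochromatic e2 g|)%:R :> rat)%R.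
  by rewrite ler_nat card_boundary_agreement.
have V1_le : (#|V1|%:R <= 2 * #|agreement g|%:R
                          + (#|V2| * (2 * #|V2| * M))%:R :> rat)%R.
  by rewrite -natrM -natrD ler_nat card_agreement_ge.
nra.
Qed.

End FibreBalance.

Fixpoint tower_proj (V : nat -> finType) (p : forall n, V n.+1 -> V n) (n j : nat) :
    V (j + n) -> V n :=
  match j return V (j + n) -> V n with
  | 0 => id
  | j'.+1 => fun x => @tower_proj V p n j' (p (j' + n) x)
  end.
Arguments tower_proj {V} p n j.

Unset Implicit Arguments.

Section Tower.
Context {V : nat -> finType} {adj : forall n, rel (V n)} {p : forall n, V n.+1 -> V n}.
Hypothesis tower : covering_tower adj p.

Lemma tower_sym n : symmetric (adj n).
Proof. by have [[]] := tower n. Qed.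

Lemma tower_irr n : irreflexive (adj n).
Proof. by have [[]] := tower n. Qed.

Lemma tower_connect n x y : connect (adj n) x y.
Proof. by have [_ []] := tower n. Qed.

Lemma tower_card_gt0 n : 0 < #|V n|.
Proof. by have [_ []] := tower n. Qed.

Lemma tower_proj_cover n j : local_cover (adj (j + n)) (adj n) (tower_proj p n j).
Proof.
elim: j => [|j IHj]; first exact: local_cover_id.
have [_ _ /covering_map_local p_cover] := tower (j + n).
exact: local_cover_comp p_cover IHj.
Qed.

Lemma tower_bipartite N n : N <= n -> bipartite (adj N) -> bipartite (adj n).
Proof. by move/subnK <-; apply: bipartite_local_cover (tower_proj_cover N (n - N)). Qed.

Context {c : rat}.
Hypotheses (c_gt0 : (0 < c)%R) (tower_cheeger : forall n, cheeger_ge (adj n) c).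
Hypothesis tower_nonbip : forall n, ~ bipartite (adj n).

Lemma tower_monochromatic_above n g m (col : V (m + n) -> bool) :
  (4 * #|monochromatic (adj n) g|%:R <= c * #|V n|%:R)%R ->
  (c * #|V (m + n)|%:R
     <= 4 * (1 + c * #|V n|%:R ^+ 2) * #|monochromatic (adj (m + n)) col|%:R)%R.
Proof.
move=> small; set f := tower_proj p n m; have f_cover := tower_proj_cover n m.
have [v0 _] := card_gt0P (tower_card_gt0 n).
have fibreD v : #|fibre f v| = #|fibre f v0|.
  exact (card_fibre_connect f_cover (tower_sym (m + n)) (tower_sym n)
           (tower_connect n v v0)).
have card_Vmn : #|V (m + n)| = #|V n| * #|fibre f v0|.
  rewrite -cardsT (card_fibre_partition f) (eq_bigr (fun=> #|fibre f v0|)).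
    by rewrite sum_nat_const.
  by move=> v _; rewrite setIT fibreD.
have := cheeger_monochromatic f_cover (tower_sym (m + n)) (tower_sym n) fibreD col
  (tower_connect n) (tower_nonbip n) g (ltW c_gt0) (tower_cheeger _).
have := ler_wpM2l (ler0n _ #|fibre f v0|) small.
rewrite card_Vmn !natrM !natrD !natrM; nra.
Qed.

Lemma tower_monochromatic_below n m (col : V m -> bool) : m <= n ->
  (c * #|V m|%:R <= 4 * (1 + c * #|V n|%:R ^+ 2) * #|monochromatic (adj m) col|%:R)%R.
Proof.
move=> le_mn.
have : #|V m| <= #|V n|.
  by rewrite -(subnK le_mn); exact: card_local_cover (tower_proj_cover m (n - m)).
rewrite -(ler_nat rat) => Vm_le.
have Vn_ge1 : (1 <= #|V n|%:R :> rat)%R by rewrite ler1n tower_card_gt0.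
have mono_ge1 : (1 <= #|monochromatic (adj m) col|%:R :> rat)%R.
  by rewrite ler1n monochromatic_gt0 ?tower_nonbip.
have Vn_le_sq : (#|V n|%:R <= #|V n|%:R ^+ 2 :> rat)%R.
  by rewrite expr2 ler_peMr.
have K_ge0 : (0 <= 1 + c * #|V n|%:R ^+ 2)%R.
  by rewrite addr_ge0 // mulr_ge0 ?sqr_ge0 // ltW.
apply: (@le_trans _ _ (c * #|V n|%:R ^+ 2)%R).
  by apply: ler_wpM2l; [exact: ltW | exact: le_trans Vm_le Vn_le_sq].
apply: (@le_trans _ _ (1 + c * #|V n|%:R ^+ 2)%R); first by rewrite lerDr.
by rewrite mulrAC ler_peMl //; lra.
Qed.

Lemma tower_bip_erase_linear :
  exists r : rat, (0 < r)%R /\ forall m, bip_erase_ge (adj m) (r * #|V m|%:R)%R.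
Proof.
have [[n [g small]] | no_small] := classic (exists n (g : V n -> bool),
  (4 * #|monochromatic (adj n) g|%:R <= c * #|V n|%:R)%R).
  set K := (1 + c * #|V n|%:R ^+ 2)%R.
  have K_gt0 : (0 < K)%R by rewrite /K ltr_pwDl // mulr_ge0 ?sqr_ge0 // ltW.
  exists (c / (8 * K))%R; split; first by rewrite divr_gt0 ?mulr_gt0.
  move=> m; apply: bip_erase_ge_monochromatic (tower_irr m) K_gt0 _ => col.
  have [le_nm | /ltnW le_mn] := leqP n m; last exact: tower_monochromatic_below.
  move: col; rewrite -(subnK le_nm) => col; exact: tower_monochromatic_above small.
exists (c / (8 * 1))%R; split; first by rewrite divr_gt0 ?mulr_gt0.
move=> m; apply: bip_erase_ge_monochromatic (tower_irr m) ltr01 _ => col.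
rewrite mulr1; apply/ltW/negPn/negP; rewrite -leNgt => large.
by apply: no_small; exists m, col.
Qed.

End Tower.

Theorem theorem9 (k : nat) (V : nat -> finType) (adj : forall n, rel (V n))
    (p : forall n, V n.+1 -> V n) :
  covering_tower adj p ->
  (forall n, regular_graph k (adj n)) ->
  expanding adj ->
  let P1 := exists N : nat, forall n, (N <= n)%N -> bipartite (adj n) in
  let P2 := exists r : rat, (0 < r)%R /\
              forall n, bip_erase_ge (adj n) (r * #|V n|%:R)%R in
  (P1 \/ P2) /\ ~ (P1 /\ P2).
Proof.
move=> tower _ [c [c_gt0 cheeger]] P1 P2; split.
  have [|not_P1] := classic P1; [by left | right].
  apply: (tower_bip_erase_linear tower c_gt0 cheeger) => n n_bip; apply: not_P1.
  by exists n => m le_nm; apply: tower_bipartite tower n m le_nm n_bip.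
case=> -[N bip] [r [r_gt0 robust]].
have := bip_erase_ge_bipartite (bip N (leqnn N)) (robust N).
by rewrite leNgt mulr_gt0 ?ltr0n ?(tower_card_gt0 tower).
Qed.
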